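(* Let $B$ and $C$ be sets and let $s,t:B\to C$ be bijections such that $s(a)\neq t(a)$ for all $a\in B$. Then there is a decomposition of $B$ into three pairwise disjoint subsets $B=B_0\sqcup B_1\sqcup B_2$ such that $s(B_i)\cap t(B_i)=\varnothing$ for each $i\in\{0,1,2\}$. *)

From mathcomp Require Import ssreflect ssrfun ssrbool.

From mathcomp Require Import ssreflect ssrfun ssrbool ssrnat.
From Stdlib Require Import Classical ClassicalEpsilon.
From Stdlib Require Import FunctionalExtensionality PropExtensionality.

(* With f := s^-1 \o t, the equation s a = t a' says a = f a', so it suffices to
   colour the fixed-point-free permutation f with three colours so that f x and
   x always differ in colour.  Choose a representative r in every orbit; colour
   f^n r by the parity of the least such n, and the points g^m r (g := f^-1) not
   of this form by the parity of m.  Parity alternates along f except at the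
   closing step of an odd cycle, whose last point gets the third colour. *)

Definition least (P : nat -> Prop) n := P n /\ forall k, k < n -> ~ P k.

Lemma least_exists {P : nat -> Prop} {n} : P n -> exists m, least P m.
Proof.
elim/ltn_ind: n => n IH Pn.
case: (classic (exists2 k, k < n & P k)) => [[k lt_kn Pk] | none].
  exact: IH lt_kn Pk.
by exists n; split=> // k lt_kn Pk; apply: none; exists k.
Qed.

Lemma least_unique {P : nat -> Prop} {n n'} : least P n -> least P n' -> n = n'.
Proof.
move=> [Pn min_n] [Pn' min_n']; case: (ltngtP n n') => // lt.
- by case: (min_n' _ lt).
- by case: (min_n _ lt).
Qed.

Definition least_witness (P : nat -> Prop) := epsilon (inhabits 0) (least P).

Lemma least_witnessE {P : nat -> Prop} {n} : least P n -> least_witness P = n.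
Proof. by move=> ln; apply: least_unique (ln); apply: epsilon_spec; exists n. Qed.

Section Orbits.

Variables (B : Type) (f g : B -> B).
Hypotheses (fK : cancel f g) (gK : cancel g f).

Lemma iterK n : cancel (iter n f) (iter n g).
Proof. by elim: n => [|n IH] x //; rewrite iterS iterSr IH fK. Qed.

Definition same_orbit a b := exists n m, iter n f a = iter m f b.

Lemma same_orbit_sym {a b} : same_orbit a b -> same_orbit b a.
Proof. by move=> [n [m E]]; exists m, n. Qed.

Lemma same_orbit_trans {a b c} : same_orbit a b -> same_orbit b c -> same_orbit a c.
Proof.
move=> [n [m Eab]] [p [q Ebc]]; exists (p + n), (m + q).
by rewrite !iterD Eab -!iterD addnC iterD Ebc -iterD.
Qed.

Lemma same_orbit_f x : same_orbit x (f x).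
Proof. by exists 1, 0. Qed.

Definition orbit_rep x := epsilon (inhabits x) (same_orbit x).

Lemma same_orbit_rep x : same_orbit (orbit_rep x) x.
Proof. by apply: same_orbit_sym; apply: epsilon_spec; exists x, 0, 0. Qed.

Lemma orbit_rep_f x : orbit_rep (f x) = orbit_rep x.
Proof.
rewrite /orbit_rep.
have -> : same_orbit (f x) = same_orbit x.
  apply: functional_extensionality => y; apply: propositional_extensionality.
  have x_fx := same_orbit_f x.
  split=> [fx_y | x_y]; first exact: same_orbit_trans x_fx fx_y.
  exact: same_orbit_trans (same_orbit_sym x_fx) x_y.
by apply: epsilon_inh_irrelevance; exists x, 0, 0.
Qed.

Definition reached_fwd x n := iter n f (orbit_rep x) = x.
Definition reached_bwd x m := iter m g (orbit_rep x) = x.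

Lemma reached_fwd_or_bwd x :
  (exists n, reached_fwd x n) \/ (exists m, reached_bwd x m).
Proof.
have [n [m E]] := same_orbit_rep x.
case: (leqP m n) => [le_mn | lt_nm]; [left; exists (n - m) | right; exists (m - n)].
  by rewrite /reached_fwd -(iterK m (iter _ f _)) -iterD subnKC // E iterK.
rewrite /reached_bwd; have -> : orbit_rep x = iter (m - n) f x.
  by apply: (can_inj (iterK n)); rewrite E -iterD subnKC // ltnW.
exact: iterK.
Qed.

Lemma least_fwd_f {x n} : least (reached_fwd x) n -> f x <> orbit_rep x ->
  least (reached_fwd (f x)) n.+1.
Proof.
move=> [xn min_n] fx_rep; split; first by rewrite /reached_fwd orbit_rep_f iterS xn.
case=> [|k] lt_kn; rewrite /reached_fwd orbit_rep_f /= => E.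
  exact: fx_rep (esym E).
by apply: (min_n k lt_kn); apply: (can_inj fK).
Qed.

Lemma not_fwd_f {x m} : ~ (exists n, reached_fwd x n) ->
  least (reached_bwd x) m.+2 -> ~ (exists n, reached_fwd (f x) n).
Proof.
move=> not_fwd [_ min_m] [[|k]]; rewrite /reached_fwd orbit_rep_f /= => E.
  by apply: (min_m 1) => //; rewrite /reached_bwd /= E fK.
by apply: not_fwd; exists k; apply: (can_inj fK).
Qed.

Lemma least_bwd_f {x m} : least (reached_bwd x) m.+2 ->
  least (reached_bwd (f x)) m.+1.
Proof.
move=> [xm min_m]; split.
  by rewrite /reached_bwd orbit_rep_f -[in RHS]xm /= gK.
move=> j lt_jm; rewrite /reached_bwd orbit_rep_f => E.
by apply: (min_m j.+1 lt_jm); rewrite /reached_bwd iterS E fK.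
Qed.

Hypothesis f_neq : forall x, f x <> x.

(* The colour 2 goes to the point x = f^n r closing a cycle of odd length n.+1;
   the boolean [odd n] is read as the colour 0 or 1. *)
Definition color x : nat :=
  if excluded_middle_informative (exists n, reached_fwd x n) then
    let n := least_witness (reached_fwd x) in
    if excluded_middle_informative (f x = orbit_rep x /\ ~~ odd n) then 2
    else odd n
  else odd (least_witness (reached_bwd x)).

Lemma color_fwd_last {x n} : least (reached_fwd x) n ->
  f x = orbit_rep x -> ~~ odd n -> color x = 2.
Proof.
move=> ln fx_rep even_n; rewrite /color.
case: (excluded_middle_informative (exists k, reached_fwd x k)) => [? | no_fwd] /=.
  rewrite (least_witnessE ln).
  by case: excluded_middle_informative => // not_last; case: not_last.
by case: no_fwd; exists n; case: ln.
Qed.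

Lemma color_fwd {x n} : least (reached_fwd x) n ->
  ~ (f x = orbit_rep x /\ ~~ odd n) -> color x = odd n.
Proof.
move=> ln not_last; rewrite /color.
case: (excluded_middle_informative (exists k, reached_fwd x k)) => [? | no_fwd] /=.
  by rewrite (least_witnessE ln); case: excluded_middle_informative.
by case: no_fwd; exists n; case: ln.
Qed.

Lemma color_bwd {x m} : ~ (exists n, reached_fwd x n) ->
  least (reached_bwd x) m -> color x = odd m.
Proof.
move=> not_fwd lm; rewrite /color.
case: (excluded_middle_informative (exists k, reached_fwd x k)) => // ? /=.
by rewrite (least_witnessE lm).
Qed.

Lemma color_rep y : orbit_rep y = y -> color y = 0.
Proof.
move=> rep_y; have l0 : least (reached_fwd y) 0 by [].
by rewrite (color_fwd l0) // => -[fy_y _]; apply: (f_neq y); rewrite fy_y.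
Qed.

Lemma color_lt3 x : color x < 3.
Proof.
have bool_lt3 (b : bool) : b < 3 by case: b.
rewrite /color; case: excluded_middle_informative => ? /=; last exact: bool_lt3.
by case: excluded_middle_informative => ? /=; last exact: bool_lt3.
Qed.

Lemma color_f_fwd {x n} : least (reached_fwd x) n -> color (f x) <> color x.
Proof.
move=> ln; case: (classic (f x = orbit_rep x)) => [fx_rep | fx_rep].
  rewrite (color_rep (f x)); last by rewrite orbit_rep_f fx_rep.
  case: (boolP (odd n)) => [odd_n | even_n]; last by rewrite (color_fwd_last ln).
  by rewrite (color_fwd ln) ?odd_n // => -[].
have lfn := least_fwd_f ln fx_rep.
rewrite (color_fwd ln); last by case.
case: (classic (f (f x) = orbit_rep (f x) /\ ~~ odd n.+1)) => [[ffx even_n1] | not_last].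
  by rewrite (color_fwd_last lfn ffx even_n1); case: odd.
by rewrite (color_fwd lfn not_last) /=; case: odd.
Qed.

Lemma color_f_bwd {x m} : ~ (exists n, reached_fwd x n) ->
  least (reached_bwd x) m -> color (f x) <> color x.
Proof.
move=> not_fwd lm; rewrite (color_bwd not_fwd lm).
case: m lm => [|[|m]] lm.
- by case: not_fwd; exists 0; case: lm.
- rewrite (color_rep (f x)) // orbit_rep_f.
  by case: lm => x1 _; rewrite -[in RHS]x1 /= gK.
- by rewrite (color_bwd (not_fwd_f not_fwd lm) (least_bwd_f lm)) /=; case: odd.
Qed.

Lemma color_f x : color (f x) <> color x.
Proof.
case: (classic (exists n, reached_fwd x n)) => [[n xn] | not_fwd].
  by have [m lm] := least_exists xn; apply: color_f_fwd lm.
case: (reached_fwd_or_bwd x) => [// | [m xm]].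
by have [k lm] := least_exists xm; apply: color_f_bwd lm.
Qed.

End Orbits.

Lemma fixpoint_free_perm_3coloring {B : Type} {f g : B -> B} :
  cancel f g -> cancel g f -> (forall x, f x <> x) ->
  exists c : B -> nat, (forall x, c x < 3) /\ (forall x, c (f x) <> c x).
Proof.
move=> fK gK f_neq; exists (@color B f g).
by split=> x; [apply: color_lt3 | apply: color_f].
Qed.

Theorem lemma3p5 (B C : Type) (s t : B -> C)
  (hs : bijective s) (ht : bijective t) (hst : forall a : B, s a <> t a) :
  exists B0 B1 B2 : B -> Prop,
    (forall a, B0 a \/ B1 a \/ B2 a) /\
    (forall a, ~ (B0 a /\ B1 a)) /\
    (forall a, ~ (B0 a /\ B2 a)) /\
    (forall a, ~ (B1 a /\ B2 a)) /\
    (forall a a', B0 a -> B0 a' -> s a <> t a') /\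
    (forall a a', B1 a -> B1 a' -> s a <> t a') /\
    (forall a a', B2 a -> B2 a' -> s a <> t a').
Proof.
case: hs => s' sK s'K; case: ht => t' tK t'K.
have fK : cancel (s' \o t) (t' \o s) by move=> a /=; rewrite s'K tK.
have gK : cancel (t' \o s) (s' \o t) by move=> a /=; rewrite t'K sK.
have f_neq a : s' (t a) <> a by move=> fa; apply: (hst a); rewrite -{1}fa s'K.
have [c [c_lt3 c_f]] := fixpoint_free_perm_3coloring fK gK f_neq.
have separated a a' : c a = c a' -> s a <> t a'.
  by move=> caa' sta; apply: (c_f a'); rewrite /= -sta sK.
exists (fun a => c a = 0), (fun a => c a = 1), (fun a => c a = 2).
do !split; try by move=> a [->].
- by move=> a; move: (c_lt3 a); case: (c a) => [|[|[|]]]; auto.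
all: by move=> a a' ca ca'; apply: separated; rewrite ca ca'.
Qed.
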